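(* Let $G$ be a topological group and $U$ a nonempty open subset of $G$. Then the open cover $\mathcal{U}=\{g\cdot U\}_{g\in G}$ of $G$ admits a $\mathcal{U}$-small partition of unity.
   Context: A partition of unity on $X$ indexed by a nonempty set $S$ is a family $\{f_s\}_{s\in S}$ of functions $f_s:X\to[0,1]$ with $\sum_{s\in S}f_s(x)=1$ for all $x$, such that the induced map $f:X\to l_1(S)$, $f(x)(s)=f_s(x)$, is continuous (where $l_1(S)$ carries the norm $\|g\|=\sum_{s}|g(s)|$). It is $\mathcal{U}$-small if for each $s\in S$ the carrier $f_s^{-1}((0,1])$ is contained in some element of $\mathcal{U}$. *)

From Stdlib Require Import Reals List.
Import ListNotations.
Open Scope R_scope.

Record TopGroup : Type := {
  carrier :> Type;
  mul : carrier -> carrier -> carrier;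
  inv : carrier -> carrier;
  one : carrier;
  mul_assoc : forall x y z, mul x (mul y z) = mul (mul x y) z;
  mul_one_l : forall x, mul one x = x;
  mul_one_r : forall x, mul x one = x;
  mul_inv_l : forall x, mul (inv x) x = one;
  mul_inv_r : forall x, mul x (inv x) = one;
  is_open : (carrier -> Prop) -> Prop;
  open_full : is_open (fun _ => True);
  open_inter : forall A B, is_open A -> is_open B -> is_open (fun x => A x /\ B x);
  open_union : forall (I : Type) (F : I -> carrier -> Prop),
      (forall i, is_open (F i)) -> is_open (fun x => exists i, F i x);
  mul_cont : forall x y (W : carrier -> Prop), is_open W -> W (mul x y) ->
      exists A B : carrier -> Prop, is_open A /\ is_open B /\ A x /\ B y /\
        (forall a b, A a -> B b -> W (mul a b));
  inv_cont : forall W, is_open W -> is_open (fun x => W (inv x))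
}.

Arguments mul {_}.
Arguments inv {_}.
Arguments is_open {_}.

Definition fin_sum {S : Type} (a : S -> R) (l : list S) : R :=
  fold_right Rplus 0 (map a l).

(** [has_sum a L]: the (unordered) sum of the nonnegative family [a] is [L],
    i.e. [L] is the supremum of the finite partial sums. *)
Definition has_sum {S : Type} (a : S -> R) (L : R) : Prop :=
  is_lub (fun r => exists l : list S, NoDup l /\ r = fin_sum a l) L.

Definition l1_norm {S : Type} (g : S -> R) (N : R) : Prop :=
  has_sum (fun s => Rabs (g s)) N.

Definition partition_of_unity {G : TopGroup} {S : Type} (f : S -> G -> R) : Prop :=
  inhabited S /\
  (forall s x, 0 <= f s x <= 1) /\
  (forall x, has_sum (fun s => f s x) 1) /\
  (* continuity of the induced map G -> l1(S) *)
  (forall x (eps : R), 0 < eps ->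
     exists V : G -> Prop, is_open V /\ V x /\
       forall y, V y -> exists N, l1_norm (fun s => f s y - f s x) N /\ N < eps).

Definition translate {G : TopGroup} (g : G) (U : G -> Prop) : G -> Prop :=
  fun x => exists u, U u /\ x = mul g u.

Definition small_for_translates {G : TopGroup} {S : Type} (f : S -> G -> R)
    (U : G -> Prop) : Prop :=
  forall s, exists g : G, forall x, 0 < f s x -> translate g U x.

(** Let [U] be a nonempty open subset of a topological group [G] and [u ∈ U];
    then [W := u⁻¹U] is an open neighbourhood of [1], and [x ∈ bW] implies
    [x ∈ (bu⁻¹)U].

    - Pseudometric spaces (Stone's theorem).  For a pseudometric [d] and a
      radius [r > 0], a well-ordering of the points produces open "cells"
      [V(n,b)] (level [n], center [b]) with [V(n,b) ⊆ B(b,r)], covering the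
      space, and locally finite.  The truncated distances to the complements
      of the cells, normalised by their locally finite sum, form a partition
      of unity continuous into [l¹], with each carrier inside some [B(b,r)].
    - Topological groups (Birkhoff–Kakutani).  Iterating "pick a symmetric
      [V] with [V³ ⊆ V']" gives neighbourhoods [V_n] of [1]; the chain
      pseudometric [d(x,y) = inf Σ 2^-n_i] over chains with
      [x_i⁻¹x_(i+1) ∈ V_(n_i)] is continuous, and Frink's halving argument
      shows that [d(x,y) < 1/4] forces [x⁻¹y ∈ W].
    - The theorem applies Stone's construction to this pseudometric with
      [r = 1/4]. *)

From Stdlib Require Import Reals List Lra Lia ClassicalEpsilon Classical
  FunctionalExtensionality PropExtensionality.
From HB Require structures.
From mathcomp Require ssreflect ssrfun ssrbool eqtype boolp wochoice.
Import ListNotations.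
Open Scope R_scope.

Module WellOrdering.
Import structures ssreflect ssrfun ssrbool eqtype boolp wochoice.

Lemma exists_well_ordering (T : Type) : exists le : T -> T -> Prop,
  (forall A : T -> Prop, (exists x, A x) -> exists z, A z /\ forall x, A x -> le z x) /\
  (forall x y, le x y -> le y x -> x = y).
Proof.
pose TE : eqType := HB.pack T (gen_eqMixin T).
have [le wo] := well_ordering_principle TE.
have least (A : TE -> bool) : (exists x, A x) -> exists z, minimum_of le A z.
  by move=> [x Ax]; have [z [zmin _]] := wo A (ex_intro _ x Ax); exists z.
exists (fun x y : T => le x y : Prop); split.
- move=> A [x Ax].
  have [z [zA zlb]] := least (fun t : TE => `[< A t >]) (ex_intro _ x (asboolT Ax)).
  exists z; split; first by move: zA; rewrite unfold_in => /asboolP.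
  by move=> y Ay; apply: zlb; rewrite unfold_in; apply/asboolP.
- have refl (x : TE) : le x x.
    have [z [zx zlb]] := least (fun t : TE => t == x) (ex_intro _ x (eqxx x)).
    move: zx; rewrite unfold_in /= => /eqP zx.
    by rewrite -{1}zx; apply: zlb; rewrite unfold_in /=.
  move=> x y xy yx.
  have {}xy : le (x : TE) (y : TE) := xy.
  have {}yx : le (y : TE) (x : TE) := yx.
  pose A := fun t : TE => (t == x) || (t == y).
  have [z [_ zuniq]] := wo A (ex_intro _ x (introT orP (or_introl (eqxx (x : TE))))).
  have minx : minimum_of le A x.
    split; first by rewrite unfold_in /A eqxx.
    by move=> t; rewrite unfold_in => /orP[/eqP->|/eqP->].
  have miny : minimum_of le A y.
    split; first by rewrite unfold_in /A eqxx orbT.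
    by move=> t; rewrite unfold_in => /orP[/eqP->|/eqP->].
  by rewrite -(zuniq _ minx) -(zuniq _ miny).
Qed.
End WellOrdering.

Definition is_inf (P : R -> Prop) (m : R) : Prop :=
  (forall t, P t -> m <= t) /\ (forall m', (forall t, P t -> m' <= t) -> m' <= m).

Definition real_inf (P : R -> Prop) : R := epsilon (inhabits 0) (is_inf P).

Lemma real_inf_spec (P : R -> Prop) : (exists t, P t) -> (forall t, P t -> 0 <= t) ->
  is_inf P (real_inf P).
Proof.
  intros [t0 Ht0] Hlb. unfold real_inf. apply epsilon_spec.
  set (E := fun x => P (- x)).
  assert (Hbound : bound E) by (exists 0; intros x Ex; apply Hlb in Ex; lra).
  assert (Hne : exists x, E x) by (exists (- t0); unfold E; rewrite Ropp_involutive; auto).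
  destruct (completeness E Hbound Hne) as [m [Hub Hleast]].
  exists (- m). split.
  - intros t Pt. assert (Et : E (- t)) by (unfold E; rewrite Ropp_involutive; auto).
    apply Hub in Et. lra.
  - intros m' Hm'. assert (m <= - m'); [|lra].
    apply Hleast. intros x Ex. apply Hm' in Ex. lra.
Qed.

Definition eqdec {A : Type} : forall x y : A, {x = y} + {x <> y} :=
  fun x y => excluded_middle_informative (x = y).

Lemma fin_sum_cons {S} (a : S -> R) x l : fin_sum a (x :: l) = a x + fin_sum a l.
Proof. reflexivity. Qed.

Lemma fin_sum_le {S} (a b : S -> R) l :
  (forall s, In s l -> a s <= b s) -> fin_sum a l <= fin_sum b l.
Proof.
  induction l as [|x l IH]; intros H; [apply Rle_refl|]. rewrite !fin_sum_cons.
  apply Rplus_le_compat; [apply H; simpl; auto|apply IH; intros; apply H; simpl; auto].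
Qed.

Lemma fin_sum_ext {S} (a b : S -> R) l :
  (forall s, In s l -> a s = b s) -> fin_sum a l = fin_sum b l.
Proof. intros H. apply Rle_antisym; apply fin_sum_le; intros s Hs; rewrite H; auto; lra. Qed.

Lemma fin_sum_nonneg {S} (a : S -> R) l : (forall s, 0 <= a s) -> 0 <= fin_sum a l.
Proof.
  intros H. induction l as [|x l IH]; [apply Rle_refl|].
  rewrite fin_sum_cons. pose proof (H x). lra.
Qed.

Lemma fin_sum_In {S} (a : S -> R) l s : (forall s, 0 <= a s) -> In s l -> a s <= fin_sum a l.
Proof.
  intros H. induction l as [|x l IH]; intros Hin; [destruct Hin|]. rewrite fin_sum_cons.
  destruct Hin as [->|Hin].
  - pose proof (fin_sum_nonneg a l H). lra.
  - specialize (IH Hin). pose proof (H x). lra.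
Qed.

Lemma fin_sum_plus {S} (a b : S -> R) l :
  fin_sum (fun s => a s + b s) l = fin_sum a l + fin_sum b l.
Proof. induction l as [|x l IH]; [cbn; lra|]. rewrite !fin_sum_cons, IH. lra. Qed.

Lemma fin_sum_scal {S} (a : S -> R) c l : fin_sum (fun s => c * a s) l = c * fin_sum a l.
Proof. induction l as [|x l IH]; [cbn; lra|]. rewrite !fin_sum_cons, IH. lra. Qed.

Lemma fin_sum_minus {S} (a b : S -> R) l :
  fin_sum (fun s => a s - b s) l = fin_sum a l - fin_sum b l.
Proof. induction l as [|x l IH]; [cbn; lra|]. rewrite !fin_sum_cons, IH. lra. Qed.

Lemma fin_sum_abs {S} (a : S -> R) l : Rabs (fin_sum a l) <= fin_sum (fun s => Rabs (a s)) l.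
Proof.
  induction l as [|x l IH]; [cbn; rewrite Rabs_R0; lra|]. rewrite !fin_sum_cons.
  eapply Rle_trans; [apply Rabs_triang|]. lra.
Qed.

Lemma fin_sum_bound {S} (a : S -> R) l c :
  (forall s, In s l -> a s <= c) -> fin_sum a l <= INR (length l) * c.
Proof.
  induction l as [|x l IH]; intros H; [cbn; lra|].
  rewrite fin_sum_cons. cbn [length]. rewrite S_INR.
  assert (a x <= c) by (apply H; simpl; auto).
  assert (fin_sum a l <= INR (length l) * c) by (apply IH; intros; apply H; simpl; auto).
  lra.
Qed.

Lemma fin_sum_remove {S} (a : S -> R) L x :
  NoDup L -> In x L -> fin_sum a L = a x + fin_sum a (remove eqdec x L).
Proof.
  induction L as [|y L IH]; intros ND Hin; [destruct Hin|].
  inversion ND as [|? ? HyL NDL]; subst. cbn [remove]. destruct (eqdec x y) as [->|ne].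
  - rewrite notin_remove by auto. reflexivity.
  - destruct Hin as [->|Hin]; [congruence|].
    rewrite !fin_sum_cons, (IH NDL Hin). lra.
Qed.

Lemma NoDup_remove_eqdec {S} (L : list S) x : NoDup L -> NoDup (remove eqdec x L).
Proof.
  induction L as [|y L IH]; intros ND; [constructor|]. inversion ND; subst. cbn [remove].
  destruct (eqdec x y); auto. constructor; auto. intros Hin. apply in_remove in Hin. tauto.
Qed.

Lemma fin_sum_support {S} (a : S -> R) l L : (forall s, 0 <= a s) -> NoDup l -> NoDup L ->
  (forall s, In s l -> a s <> 0 -> In s L) -> fin_sum a l <= fin_sum a L.
Proof.
  intros Ha. revert L. induction l as [|x l IH]; intros L ndl ndL Hsupp.
  { apply fin_sum_nonneg; auto. }
  inversion ndl as [|? ? Hxl ndl']; subst. rewrite fin_sum_cons.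
  destruct (Req_dec (a x) 0) as [E|E].
  - rewrite E. assert (fin_sum a l <= fin_sum a L); [|lra].
    apply IH; auto. intros; apply Hsupp; simpl; auto.
  - assert (HxL : In x L) by (apply Hsupp; simpl; auto).
    rewrite (fin_sum_remove a L x ndL HxL).
    assert (fin_sum a l <= fin_sum a (remove eqdec x L)); [|lra].
    apply IH; auto using NoDup_remove_eqdec.
    intros s Hin Hne. apply in_in_remove; [intros ->; contradiction|]. apply Hsupp; simpl; auto.
Qed.

Lemma has_sum_fin {S} (a : S -> R) L : (forall s, 0 <= a s) -> NoDup L ->
  (forall s, a s <> 0 -> In s L) -> has_sum a (fin_sum a L).
Proof.
  intros Ha ND HL. split.
  - intros t [l [ndl ->]]. apply fin_sum_support; auto.
  - intros b Hb. apply Hb. exists L; auto.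
Qed.

Lemma has_sum_unique {S} (a : S -> R) x y : has_sum a x -> has_sum a y -> x = y.
Proof. apply is_lub_u. Qed.

Lemma normalized_sum_close {S} (a b : S -> R) L t :
  (forall s, 0 <= b s) -> (forall s, In s L -> Rabs (a s - b s) <= t) ->
  0 < fin_sum b L -> 2 * (INR (length L) * t) <= fin_sum b L ->
  fin_sum (fun s => Rabs (a s / fin_sum a L - b s / fin_sum b L)) L
    <= 4 * (INR (length L) * t) / fin_sum b L.
Proof.
  intros Hb Hab HB HKt.
  set (A := fin_sum a L) in *; set (B := fin_sum b L) in *; set (K := INR (length L)) in *.
  assert (Hdiff : fin_sum (fun s => Rabs (a s - b s)) L <= K * t) by (apply fin_sum_bound; auto).
  assert (HAB : Rabs (A - B) <= K * t).
  { unfold A, B. rewrite <- fin_sum_minus. eapply Rle_trans; [apply fin_sum_abs|exact Hdiff]. }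
  assert (HA : B / 2 <= A) by (pose proof (Rle_abs (B - A)); rewrite Rabs_minus_sym in HAB; lra).
  assert (HKt0 : 0 <= K * t) by (eapply Rle_trans; [apply Rabs_pos|exact HAB]).
  set (c := Rabs (A - B) / (A * B)).
  assert (Hterm : forall s, Rabs (a s / A - b s / B) <= / A * Rabs (a s - b s) + c * b s).
  { intros s. replace (a s / A - b s / B) with (/ A * (a s - b s) + (B - A) / (A * B) * b s)
      by (field; lra).
    eapply Rle_trans; [apply Rabs_triang|]. rewrite !Rabs_mult, Rabs_inv.
    unfold c, Rdiv. rewrite Rabs_mult, Rabs_inv, (Rabs_minus_sym B A).
    rewrite (Rabs_pos_eq A), (Rabs_pos_eq (A * B)), (Rabs_pos_eq (b s)); auto; nra. }
  eapply Rle_trans; [apply fin_sum_le; intros s _; apply Hterm|].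
  rewrite fin_sum_plus, !fin_sum_scal. fold B.
  assert (Hc : c * B = Rabs (A - B) / A) by (unfold c; field; lra).
  rewrite Hc.
  assert (/ A * fin_sum (fun s => Rabs (a s - b s)) L + Rabs (A - B) / A <= 2 * (K * t) / A).
  { unfold Rdiv. apply Rmult_le_reg_l with A; [lra|].
    field_simplify; try lra. }
  assert (2 * (K * t) / A <= 4 * (K * t) / B); [|lra].
  unfold Rdiv. apply Rmult_le_reg_l with (A * B); [nra|].
  replace (A * B * (2 * (K * t) * / A)) with (2 * (K * t) * B) by (field; lra).
  replace (A * B * (4 * (K * t) * / B)) with (4 * (K * t) * A) by (field; lra).
  nra.
Qed.

Lemma functional_graph_finite {X} (P : nat -> X -> Prop) m :
  (forall i b1 b2, P i b1 -> P i b2 -> b1 = b2) ->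
  exists L : list (X * nat), NoDup L /\ forall b i, (i < m)%nat -> P i b -> In (b, i) L.
Proof.
  intros Hfun. induction m as [|m [L [_ HL]]].
  { exists []. split; [constructor|]. intros; lia. }
  assert (Hbelow : forall b i, (i < m)%nat -> P i b -> In (b, i) L) by auto.
  destruct (classic (exists b, P m b)) as [[b Hb]|Hnone].
  - exists (nodup eqdec ((b, m) :: L)). split; [apply NoDup_nodup|].
    intros b' i Hi Hb'. apply nodup_In. destruct (Nat.eq_dec i m) as [->|ne].
    + left. f_equal. eapply Hfun; eauto.
    + right. apply Hbelow; auto; lia.
  - exists (nodup eqdec L). split; [apply NoDup_nodup|].
    intros b' i Hi Hb'. apply nodup_In. destruct (Nat.eq_dec i m) as [->|ne].
    + exfalso. eauto.
    + apply Hbelow; auto; lia.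
Qed.

Definition half_pow (n : nat) : R := (/ 2) ^ n.

Lemma half_pow_pos n : 0 < half_pow n.
Proof. unfold half_pow. apply pow_lt. lra. Qed.

Lemma half_pow_S n : half_pow (S n) = half_pow n / 2.
Proof. unfold half_pow. simpl. lra. Qed.

Lemma half_pow_antitone m n : (m <= n)%nat -> half_pow n <= half_pow m.
Proof.
  induction 1 as [|n _ IH]; [lra|]. rewrite half_pow_S. pose proof (half_pow_pos n). lra.
Qed.

Lemma half_pow_le_level m n : half_pow m <= half_pow n -> (n <= m)%nat.
Proof.
  intros H. destruct (Compare_dec.le_lt_dec n m) as [|Hlt]; [auto|]. exfalso.
  pose proof (half_pow_antitone (S m) n Hlt). pose proof (half_pow_pos m).
  rewrite half_pow_S in *. lra.
Qed.

Lemma half_pow_small e : 0 < e -> exists n, half_pow n < e.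
Proof.
  intros He. destruct (pow_lt_1_zero (/ 2) ltac:(rewrite Rabs_pos_eq; lra) e He) as [N HN].
  exists N. specialize (HN N (le_n N)). unfold half_pow.
  rewrite Rabs_pos_eq in HN; auto. apply pow_le. lra.
Qed.

(** ** Stone's theorem: partitions of unity on pseudometric spaces *)
Section Stone.
Variable X : Type.
Variable d : X -> X -> R.
Hypothesis d_nonneg : forall x y, 0 <= d x y.
Hypothesis d_refl : forall x, d x x = 0.
Hypothesis d_sym : forall x y, d x y = d y x.
Hypothesis d_tri : forall x y z, d x z <= d x y + d y z.
Variable wo : X -> X -> Prop.
Hypothesis wo_least :
  forall A : X -> Prop, (exists x, A x) -> exists z, A z /\ forall x, A x -> wo z x.
Hypothesis wo_antisym : forall x y, wo x y -> wo y x -> x = y.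
Variable r : R.
Hypothesis r_pos : 0 < r.

Lemma wo_total a b : wo a b \/ wo b a.
Proof.
  destruct (wo_least (fun t => t = a \/ t = b) (ex_intro _ a (or_introl eq_refl)))
    as [z [[-> | ->] Hz]]; [left|right]; apply Hz; auto.
Qed.

Definition center (c : X) : X :=
  epsilon (inhabits c) (fun b => d b c < r /\ forall b', d b' c < r -> wo b b').

Lemma center_spec c : d (center c) c < r /\ forall b', d b' c < r -> wo (center c) b'.
Proof. unfold center. apply epsilon_spec. apply wo_least. exists c. rewrite d_refl. auto. Qed.

Definition cell_avoiding (P : X -> Prop) (n : nat) (b y : X) : Prop :=
  exists c, center c = b /\ ~ P c /\
    (forall z, d c z < 3 * half_pow n -> d b z < r) /\ d c y < half_pow n.

Fixpoint covered (n : nat) : X -> Prop :=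
  match n with
  | 0 => fun _ => False
  | S m => fun y => covered m y \/ exists b, cell_avoiding (covered m) m b y
  end.

Definition cell (n : nat) (b : X) : X -> Prop := cell_avoiding (covered n) n b.

Lemma covered_intro j n b y : (j < n)%nat -> cell j b y -> covered n y.
Proof.
  induction n as [|n IH]; intros Hj H; [lia|]. simpl.
  destruct (Nat.eq_dec j n) as [->|ne]; [right; exists b; exact H|left; apply IH; auto; lia].
Qed.

Lemma covered_elim n y : covered n y -> exists j b, (j < n)%nat /\ cell j b y.
Proof.
  induction n as [|n IH]; simpl; [tauto|]. intros [H|[b H]].
  - destruct (IH H) as [j [b [? ?]]]. exists j, b. split; auto; lia.
  - exists n, b. split; auto.
Qed.

Lemma cell_in_ball n b y : cell n b y -> d b y < r.
Proof. intros [c [_ [_ [Hball Hy]]]]. apply Hball. pose proof (half_pow_pos n). lra. Qed.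

Lemma cell_open n b y : cell n b y -> exists rho, 0 < rho /\ forall z, d y z < rho -> cell n b z.
Proof.
  intros [c [Hc [Hnew [Hball Hy]]]]. exists (half_pow n - d c y). split; [lra|].
  intros z Hz. exists c. repeat split; auto. pose proof (d_tri c y z). lra.
Qed.

(** The cells cover the space: a point [x] not covered by the first [n]
    levels, with [3·2^-n < r - d(center x, x)], lies in a level-[n] cell. *)
Lemma cells_cover x : exists n b, cell n b x.
Proof.
  destruct (center_spec x) as [Hx _].
  destruct (half_pow_small ((r - d (center x) x) / 3) ltac:(lra)) as [n Hn].
  destruct (classic (covered n x)) as [Hcov|Hcov].
  - destruct (covered_elim n x Hcov) as [j [b [_ H]]]. eauto.
  - exists n, (center x), x. repeat split; auto.
    + intros z Hz. pose proof (d_tri (center x) x z). lra.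
    + rewrite d_refl. apply half_pow_pos.
Qed.

(** Cells of the same level [i] meeting a common ball of radius [2^-(i+1)]
    have the same center: the level is [3·2^-i]-separated. *)
Lemma cells_same_center_ordered i b1 b2 y1 y2 x :
  cell i b1 y1 -> cell i b2 y2 -> d x y1 < half_pow (S i) -> d x y2 < half_pow (S i) ->
  wo b1 b2 -> b1 = b2.
Proof.
  intros [c1 [E1 [_ [Hball1 D1]]]] [c2 [E2 [_ [_ D2]]]] X1 X2 W12.
  assert (Hc2 : d b1 c2 < r).
  { apply Hball1. rewrite half_pow_S in X1, X2.
    pose proof (d_tri c1 y1 c2). pose proof (d_tri y1 x c2). pose proof (d_tri x y2 c2).
    rewrite (d_sym y1 x), (d_sym y2 c2) in *. lra. }
  apply wo_antisym; auto. rewrite <- E2. apply (proj2 (center_spec c2)). exact Hc2.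
Qed.

Lemma cells_same_center i b1 b2 y1 y2 x :
  cell i b1 y1 -> cell i b2 y2 -> d x y1 < half_pow (S i) -> d x y2 < half_pow (S i) -> b1 = b2.
Proof.
  intros. destruct (wo_total b1 b2).
  - eapply cells_same_center_ordered; eauto.
  - symmetry. eapply cells_same_center_ordered; eauto.
Qed.

Lemma cells_far_levels x n a j i k b y :
  (forall z, d x z < half_pow j -> cell n a z) -> (n < i)%nat -> (j < i)%nat -> (j < k)%nat ->
  d x y < half_pow k -> ~ cell i b y.
Proof.
  intros Hball Hni Hji Hjk Hy [c [_ [Hnew [_ Dc]]]].
  assert (Hxc : half_pow j <= d x c).
  { destruct (Rle_or_lt (half_pow j) (d x c)) as [|Hlt]; [auto|].
    exfalso. apply Hnew. apply (covered_intro n i a c Hni). auto. }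
  pose proof (d_tri x y c). rewrite (d_sym y c) in *.
  pose proof (half_pow_antitone (S j) k Hjk). pose proof (half_pow_antitone (S j) i Hji).
  rewrite half_pow_S in *. lra.
Qed.

Lemma cells_locally_finite x : exists rho, 0 < rho /\ exists L : list (X * nat), NoDup L /\
  (forall b i y, d x y < rho -> cell i b y -> In (b, i) L).
Proof.
  destruct (cells_cover x) as [n [a Ha]].
  destruct (cell_open n a x Ha) as [rho [Hrho Hball]].
  destruct (half_pow_small rho Hrho) as [j Hj].
  set (k := S (n + j)).
  assert (Hinside : forall z, d x z < half_pow j -> cell n a z) by (intros; apply Hball; lra).
  exists (half_pow k). split; [apply half_pow_pos|].
  set (P := fun i b => exists y, d x y < half_pow k /\ cell i b y).
  assert (Hlow : forall i b y, d x y < half_pow k -> cell i b y -> (i < k)%nat).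
  { intros i b y Hy Hc. destruct (Compare_dec.le_lt_dec k i) as [Hki|Hki]; auto.
    exfalso. eapply (cells_far_levels x n a j i k b y); eauto; lia. }
  destruct (functional_graph_finite P k) as [L [ND HL]].
  - intros i b1 b2 [y1 [D1 C1]] [y2 [D2 C2]].
    pose proof (Hlow _ _ _ D1 C1).
    pose proof (half_pow_antitone (S i) k ltac:(lia)).
    apply (cells_same_center i b1 b2 y1 y2 x C1 C2); lra.
  - exists L. split; auto. intros b i y Hy Hc. apply HL; [eapply Hlow; eauto|exists y; auto].
Qed.

(** The bump of cell [s = (b, n)] at [y]: the distance from [y] to the
    complement of the cell, truncated at [1]. *)
Definition bump_values (s : X * nat) (y : X) (t : R) : Prop :=
  t = 1 \/ exists z, ~ cell (snd s) (fst s) z /\ t = d y z.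

Definition bump (s : X * nat) (y : X) : R := real_inf (bump_values s y).

Lemma bump_spec s y : is_inf (bump_values s y) (bump s y).
Proof.
  apply real_inf_spec; [exists 1; left; auto|]. intros t [->|[z [_ ->]]]; auto. lra.
Qed.

Lemma bump_nonneg s y : 0 <= bump s y.
Proof. apply (proj2 (bump_spec s y)). intros t [->|[z [_ ->]]]; auto. lra. Qed.

Lemma bump_le_1 s y : bump s y <= 1.
Proof. apply (proj1 (bump_spec s y)). left; auto. Qed.

Lemma bump_lipschitz s y y' : Rabs (bump s y' - bump s y) <= d y y'.
Proof.
  assert (Hhalf : forall y y', bump s y - d y y' <= bump s y').
  { intros y1 y2. apply (proj2 (bump_spec s y2)). intros t [->|[z [Hz ->]]].
    - pose proof (bump_le_1 s y1). pose proof (d_nonneg y1 y2). lra.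
    - assert (bump s y1 <= d y1 z) by (apply (proj1 (bump_spec s y1)); right; eauto).
      pose proof (d_tri y1 y2 z). lra. }
  pose proof (Hhalf y y'). pose proof (Hhalf y' y). rewrite (d_sym y' y) in *.
  apply Rabs_le. lra.
Qed.

Lemma bump_pos_cell s y : 0 < bump s y -> cell (snd s) (fst s) y.
Proof.
  intros H. apply NNPP. intros Hout.
  assert (bump s y <= d y y) by (apply (proj1 (bump_spec s y)); right; eauto).
  rewrite d_refl in *. lra.
Qed.

Lemma cell_bump_pos s y : cell (snd s) (fst s) y -> 0 < bump s y.
Proof.
  intros Hc. destruct (cell_open _ _ _ Hc) as [rho [Hrho Hball]].
  assert (Rmin 1 rho <= bump s y).
  { apply (proj2 (bump_spec s y)). intros t [->|[z [Hz ->]]]; [apply Rmin_l|].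
    destruct (Rle_or_lt rho (d y z)). { pose proof (Rmin_r 1 rho). lra. }
    exfalso. apply Hz. auto. }
  pose proof (Rmin_pos 1 rho ltac:(lra) Hrho). lra.
Qed.

Definition local_cover (x : X) (p : R * list (X * nat)) : Prop :=
  0 < fst p /\ NoDup (snd p) /\ forall b i y, d x y < fst p -> cell i b y -> In (b, i) (snd p).

Definition local_data (x : X) : R * list (X * nat) :=
  epsilon (inhabits (1, [])) (local_cover x).

Lemma local_data_spec x : local_cover x (local_data x).
Proof.
  unfold local_data. apply epsilon_spec.
  destruct (cells_locally_finite x) as [rho [Hrho [L [ND HL]]]]. exists (rho, L). split; auto.
Qed.

Notation radius x := (fst (local_data x)).
Notation cells_near x := (snd (local_data x)).

Lemma bump_support x y s : d x y < radius x -> bump s y <> 0 -> In s (cells_near x).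
Proof.
  intros Hy Hs. destruct s as [b i]. apply (proj2 (proj2 (local_data_spec x)) b i y Hy).
  apply (bump_pos_cell (b, i) y). pose proof (bump_nonneg (b, i) y). lra.
Qed.

Lemma bumps_sum_near x y :
  d x y < radius x -> has_sum (fun s => bump s y) (fin_sum (fun s => bump s y) (cells_near x)).
Proof.
  intros Hy. apply has_sum_fin; [intros; apply bump_nonneg|apply local_data_spec|].
  intros s Hs. exact (bump_support x y s Hy Hs).
Qed.

Lemma radius_pos x : 0 < radius x.
Proof. apply local_data_spec. Qed.

Lemma self_in_radius x : d x x < radius x.
Proof. rewrite d_refl. apply radius_pos. Qed.

Definition bump_total (x : X) : R := fin_sum (fun s => bump s x) (cells_near x).

Lemma bump_total_near x y :
  d x y < radius x -> bump_total y = fin_sum (fun s => bump s y) (cells_near x).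
Proof.
  intros Hy. apply (has_sum_unique (fun s => bump s y)).
  - apply bumps_sum_near, self_in_radius.
  - apply bumps_sum_near; auto.
Qed.

Lemma bump_le_total s x : bump s x <= bump_total x.
Proof.
  destruct (Req_dec (bump s x) 0) as [E|E].
  - rewrite E. apply fin_sum_nonneg. intros; apply bump_nonneg.
  - apply (fin_sum_In (fun s => bump s x)); [intros; apply bump_nonneg|].
    apply (bump_support x x s); auto using self_in_radius.
Qed.

Lemma bump_total_pos x : 0 < bump_total x.
Proof.
  destruct (cells_cover x) as [n [b H]]. pose proof (cell_bump_pos (b, n) x H).
  pose proof (bump_le_total (b, n) x). lra.
Qed.

Definition stone_pu (s : X * nat) (x : X) : R := bump s x / bump_total x.

Lemma stone_pu_bounds s x : 0 <= stone_pu s x <= 1.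
Proof.
  unfold stone_pu. pose proof (bump_total_pos x). pose proof (bump_nonneg s x).
  pose proof (bump_le_total s x). split.
  - unfold Rdiv. apply Rmult_le_pos; [lra|left; apply Rinv_0_lt_compat; lra].
  - apply Rmult_le_reg_r with (bump_total x); auto. unfold Rdiv.
    rewrite Rmult_assoc, Rinv_l by lra. lra.
Qed.

Lemma stone_pu_support x y s : d x y < radius x -> stone_pu s y <> 0 -> In s (cells_near x).
Proof.
  intros Hy Hs. apply (bump_support x y s Hy). intros E. apply Hs. unfold stone_pu.
  rewrite E. unfold Rdiv. ring.
Qed.

Lemma stone_pu_sum x : has_sum (fun s => stone_pu s x) 1.
Proof.
  pose proof (bump_total_pos x).
  replace 1 with (fin_sum (fun s => stone_pu s x) (cells_near x)).
  - apply has_sum_fin; [intros; apply stone_pu_bounds|apply local_data_spec|].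
    intros s Hs. apply (stone_pu_support x x s); auto using self_in_radius.
  - unfold stone_pu, Rdiv. rewrite (fin_sum_ext _ (fun s => / bump_total x * bump s x))
      by (intros; ring).
    rewrite fin_sum_scal. fold (bump_total x). field. lra.
Qed.

Lemma stone_pu_l1_near x y : d x y < radius x ->
  l1_norm (fun s => stone_pu s y - stone_pu s x)
    (fin_sum (fun s => Rabs (stone_pu s y - stone_pu s x)) (cells_near x)).
Proof.
  intros Hy. apply has_sum_fin; [intros; apply Rabs_pos|apply local_data_spec|].
  intros s Hs. destruct (Req_dec (stone_pu s y) 0) as [Ey|Ey].
  - apply (stone_pu_support x x s (self_in_radius x)). intros Ex. apply Hs.
    rewrite Ey, Ex, Rminus_0_r. apply Rabs_R0.
  - exact (stone_pu_support x y s Hy Ey).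
Qed.

Lemma stone_pu_continuous (op : (X -> Prop) -> Prop)
  (d_cont : forall x e, 0 < e -> exists V, op V /\ V x /\ forall y, V y -> d x y < e) :
  forall x e, 0 < e -> exists V, op V /\ V x /\
    forall y, V y -> exists N, l1_norm (fun s => stone_pu s y - stone_pu s x) N /\ N < e.
Proof.
  intros x e He.
  set (L := cells_near x). set (K := INR (length L)). set (B := bump_total x).
  assert (HB : 0 < B) by apply bump_total_pos.
  assert (HK : 0 <= K) by apply pos_INR.
  (* Within [delta] of [x] the cells are those of [cells_near x], and the
     bound [4Kt/B] of [normalized_sum_close] is below [e]. *)
  set (delta := Rmin (radius x) (B * Rmin e 1 / (8 * (K + 1)))).
  assert (Hm : 0 < Rmin e 1) by (apply Rmin_pos; lra).
  assert (Hdelta : 0 < delta).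
  { apply Rmin_pos; [apply radius_pos|].
    apply Rdiv_lt_0_compat; nra. }
  destruct (d_cont x delta Hdelta) as [V [HV [Vx Hnear]]].
  exists V. split; [exact HV|]. split; [exact Vx|]. intros y Vy.
  set (t := d x y). assert (Ht : t < delta) by (apply Hnear; auto).
  assert (Hrad : t < radius x) by (eapply Rlt_le_trans; [exact Ht|apply Rmin_l]).
  assert (Hsmall : 8 * ((K + 1) * t) <= B * Rmin e 1).
  { assert (Hbound : t <= B * Rmin e 1 / (8 * (K + 1)))
      by (apply Rlt_le; eapply Rlt_le_trans; [exact Ht|apply Rmin_r]).
    apply Rmult_le_reg_r with (/ (8 * (K + 1))); [apply Rinv_0_lt_compat; lra|].
    replace (8 * ((K + 1) * t) * / (8 * (K + 1))) with t by (field; lra). exact Hbound. }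
  assert (Ht0 : 0 <= t) by apply d_nonneg.
  assert (HBm : B * Rmin e 1 <= B * e /\ B * Rmin e 1 <= B /\ 0 < B * e)
    by (pose proof (Rmin_l e 1); pose proof (Rmin_r e 1); repeat split; nra).
  assert (HKt : 0 <= K * t /\ K * t <= (K + 1) * t) by (split; nra).
  exists (fin_sum (fun s => Rabs (stone_pu s y - stone_pu s x)) L).
  split; [exact (stone_pu_l1_near x y Hrad)|].
  unfold stone_pu. rewrite (bump_total_near x y Hrad). fold L.
  change (fin_sum (fun s => bump s x) L) with B.
  eapply Rle_lt_trans.
  - apply (normalized_sum_close _ _ L t); [intros; apply bump_nonneg| |exact HB|].
    + intros s _. apply bump_lipschitz.
    + change (2 * (K * t) <= B). lra.
  - change (4 * (K * t) / B < e). apply Rmult_lt_reg_r with B; [exact HB|].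
    unfold Rdiv. rewrite Rmult_assoc, Rinv_l by lra. lra.
Qed.

Lemma stone_pu_carrier s x : 0 < stone_pu s x -> d (fst s) x < r.
Proof.
  intros H. apply (cell_in_ball (snd s)). apply bump_pos_cell.
  unfold stone_pu in H. pose proof (bump_total_pos x). pose proof (bump_nonneg s x).
  destruct (Req_dec (bump s x) 0) as [E|E]; [rewrite E in H; unfold Rdiv in H; lra|lra].
Qed.

Theorem stone_partition_of_unity (op : (X -> Prop) -> Prop)
  (d_cont : forall x e, 0 < e -> exists V, op V /\ V x /\ forall y, V y -> d x y < e) :
  exists f : X * nat -> X -> R,
    (forall s x, 0 <= f s x <= 1) /\ (forall x, has_sum (fun s => f s x) 1) /\
    (forall x e, 0 < e -> exists V, op V /\ V x /\
       forall y, V y -> exists N, l1_norm (fun s => f s y - f s x) N /\ N < e) /\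
    (forall s x, 0 < f s x -> d (fst s) x < r).
Proof.
  exists stone_pu. split; [exact stone_pu_bounds|]. split; [exact stone_pu_sum|].
  split; [exact (stone_pu_continuous op d_cont)|exact stone_pu_carrier].
Qed.

End Stone.

(** ** Topological groups: a continuous pseudometric with small balls *)
Section TopGroupFacts.
Variable G : TopGroup.

Lemma inv_mul_cancel_l (x y : G) : mul (inv x) (mul x y) = y.
Proof. rewrite mul_assoc, mul_inv_l, mul_one_l. reflexivity. Qed.

Lemma mul_inv_cancel_l (x y : G) : mul x (mul (inv x) y) = y.
Proof. rewrite mul_assoc, mul_inv_r, mul_one_l. reflexivity. Qed.

Lemma inv_unique (x y : G) : mul x y = one G -> inv x = y.
Proof. intros H. rewrite <- (mul_one_r G (inv x)), <- H, inv_mul_cancel_l. reflexivity. Qed.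

Lemma inv_one : inv (one G) = one G.
Proof. apply inv_unique, mul_one_l. Qed.

Lemma inv_inv (x : G) : inv (inv x) = x.
Proof. apply inv_unique, mul_inv_l. Qed.

Lemma inv_mul (x y : G) : inv (mul x y) = mul (inv y) (inv x).
Proof.
  apply inv_unique. rewrite <- mul_assoc, (mul_assoc _ y), mul_inv_r, mul_one_l, mul_inv_r.
  reflexivity.
Qed.

Lemma open_local (P : G -> Prop) :
  (forall x, P x -> exists B, is_open B /\ B x /\ forall z, B z -> P z) -> is_open P.
Proof.
  intros H.
  set (I := {B : G -> Prop | is_open B /\ forall z, B z -> P z}).
  replace P with (fun x => exists i : I, proj1_sig i x).
  - apply open_union. intros i. exact (proj1 (proj2_sig i)).
  - apply functional_extensionality. intros x. apply propositional_extensionality. split.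
    + intros [i Bx]. exact (proj2 (proj2_sig i) x Bx).
    + intros Px. destruct (H x Px) as [B [HB [Bx HBP]]]. exists (exist _ B (conj HB HBP)). auto.
Qed.

Lemma open_translate (V : G -> Prop) (g : G) : is_open V -> is_open (fun y => V (mul g y)).
Proof.
  intros HV. apply open_local. intros y Hy.
  destruct (mul_cont G g y V HV Hy) as [A [B [_ [HB [Ag [By HAB]]]]]].
  exists B. auto.
Qed.

Lemma square_root_nbhd (W : G -> Prop) : is_open W -> W (one G) ->
  exists C : G -> Prop, is_open C /\ C (one G) /\ forall a b, C a -> C b -> W (mul a b).
Proof.
  intros HW W1. rewrite <- (mul_one_l G (one G)) in W1.
  destruct (mul_cont G _ _ W HW W1) as [A [B [HA [HB [A1 [B1 HAB]]]]]].
  exists (fun x => A x /\ B x). split; [apply open_inter; auto|]. split; [auto|].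
  intros a b [? _] [_ ?]. auto.
Qed.

Definition cube_root_of (W V : G -> Prop) : Prop :=
  is_open V /\ V (one G) /\ (forall z, V z -> V (inv z)) /\
  (forall a b c, V a -> V b -> V c -> W (mul a (mul b c))).

Lemma cube_root_exists (W : G -> Prop) : is_open W -> W (one G) -> exists V, cube_root_of W V.
Proof.
  intros HW W1.
  destruct (square_root_nbhd W HW W1) as [C1 [HC1 [C1e HC1m]]].
  destruct (square_root_nbhd C1 HC1 C1e) as [C2 [HC2 [C2e HC2m]]].
  set (D := fun x => C2 x /\ C1 x).
  assert (HD : is_open D) by (apply open_inter; auto).
  exists (fun x => D x /\ D (inv x)). split; [|split; [|split]].
  - apply open_inter; auto. apply inv_cont; auto.
  - rewrite inv_one. unfold D. tauto.
  - intros y [Dy Dy']. rewrite inv_inv. split; auto.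
  - intros a b c [[Ca2 Ca1] _] [[Cb2 _] _] [[Cc2 _] _]. apply HC1m; auto.
Qed.

Definition cube_root (W : G -> Prop) : G -> Prop :=
  epsilon (inhabits (fun _ => True)) (cube_root_of W).

Lemma cube_root_spec W : is_open W -> W (one G) -> cube_root_of W (cube_root W).
Proof. intros. unfold cube_root. apply epsilon_spec, cube_root_exists; auto. Qed.

Variable W : G -> Prop.
Hypothesis W_open : is_open W.
Hypothesis W_one : W (one G).

Fixpoint nbhd (n : nat) : G -> Prop :=
  match n with 0 => fun _ => True | S m => cube_root (fun z => nbhd m z /\ W z) end.

Lemma nbhd_open_one n : is_open (nbhd n) /\ nbhd n (one G).
Proof.
  induction n as [|n [Hopen Hone]]; [split; [apply open_full|exact I]|].
  destruct (cube_root_spec (fun z => nbhd n z /\ W z)) as [? [? _]]; auto.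
  apply open_inter; auto.
Qed.

Lemma nbhd_S_cube_root n : cube_root_of (fun z => nbhd n z /\ W z) (nbhd (S n)).
Proof.
  destruct (nbhd_open_one n). apply cube_root_spec; auto. apply open_inter; auto.
Qed.

Lemma nbhd_sym n z : nbhd n z -> nbhd n (inv z).
Proof. destruct n as [|n]; [auto|]. apply (nbhd_S_cube_root n). Qed.

Lemma nbhd_cube n a b c : nbhd (S n) a -> nbhd (S n) b -> nbhd (S n) c ->
  nbhd n (mul a (mul b c)) /\ W (mul a (mul b c)).
Proof. apply (nbhd_S_cube_root n). Qed.

Lemma nbhd_step n z : nbhd (S n) z -> nbhd n z.
Proof.
  intros H. pose proof (proj2 (nbhd_open_one (S n))).
  rewrite <- (mul_one_r G z), <- (mul_one_r G (one G)). apply nbhd_cube; auto.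
Qed.

Lemma nbhd_antitone m n z : (m <= n)%nat -> nbhd n z -> nbhd m z.
Proof. induction 1; auto. intros; apply IHle, nbhd_step; auto. Qed.

Lemma nbhd_1_W z : nbhd 1 z -> W z.
Proof.
  intros H. pose proof (proj2 (nbhd_open_one 1)).
  rewrite <- (mul_one_r G z), <- (mul_one_r G (one G)). apply (nbhd_cube 0); auto.
Qed.

Inductive chain : G -> G -> list nat -> Prop :=
| chain_nil x : chain x x []
| chain_cons x y z n l : nbhd n (mul (inv x) y) -> chain y z l -> chain x z (n :: l).

Fixpoint weight (l : list nat) : R :=
  match l with [] => 0 | n :: l' => half_pow n + weight l' end.

Lemma weight_nonneg l : 0 <= weight l.
Proof. induction l as [|n l IH]; simpl; [lra|]. pose proof (half_pow_pos n). lra. Qed.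

Lemma weight_app l1 l2 : weight (l1 ++ l2) = weight l1 + weight l2.
Proof. induction l1 as [|n l IH]; simpl; [lra|]. rewrite IH. lra. Qed.

Lemma weight_rev l : weight (rev l) = weight l.
Proof. induction l as [|n l IH]; simpl; [auto|]. rewrite weight_app, IH. simpl. lra. Qed.

Lemma chain_app x y z l1 l2 : chain x y l1 -> chain y z l2 -> chain x z (l1 ++ l2).
Proof. induction 1; simpl; auto. intros; econstructor; eauto. Qed.

Lemma chain_rev x y l : chain x y l -> chain y x (rev l).
Proof.
  induction 1 as [|x y z n l Hxy _ IH]; simpl; [constructor|].
  apply chain_app with y; auto. econstructor; [|constructor].
  replace (mul (inv y) x) with (inv (mul (inv x) y)) by (rewrite inv_mul, inv_inv; auto).
  apply nbhd_sym; auto.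
Qed.

Lemma chain_split x z p m q : chain x z (p ++ m :: q) ->
  exists a b, chain x a p /\ nbhd m (mul (inv a) b) /\ chain b z q.
Proof.
  revert x. induction p as [|n p IH]; intros x H; simpl in H; inversion H; subst.
  - exists x, y. split; [constructor|auto].
  - destruct (IH y H5) as [a [b [? [? ?]]]]. exists a, b. split; [econstructor; eauto|auto].
Qed.

Lemma weight_split (l : list nat) t : l <> [] -> 0 <= t ->
  exists p m q, l = p ++ m :: q /\ weight p <= t /\ weight q <= Rmax (weight l - t) 0.
Proof.
  revert t. induction l as [|x l IH]; intros t Hne Ht; [congruence|].
  destruct (classic (half_pow x > t \/ l = [])) as [[Hbig| ->]|Hc].
  - exists [], x, l. simpl. split; [auto|]. split; [lra|].
    eapply Rle_trans; [|apply Rmax_l]. lra.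
  - exists [], x, []. simpl. split; [auto|]. split; [lra|apply Rmax_r].
  - apply not_or_and in Hc. destruct Hc as [Hsmall Hne'].
    destruct (IH (t - half_pow x) Hne' ltac:(lra)) as [p [m [q [E [Hp Hq]]]]].
    exists (x :: p), m, q. rewrite E. simpl. split; [auto|]. split; [lra|].
    rewrite <- E. replace (half_pow x + weight l - t) with (weight l - (t - half_pow x))
      by ring. exact Hq.
Qed.

Lemma weight_split_half (l : list nat) : l <> [] ->
  exists p m q, l = p ++ m :: q /\ weight p <= weight l / 2 /\ weight q <= weight l / 2.
Proof.
  intros Hne. pose proof (weight_nonneg l).
  destruct (weight_split l (weight l / 2) Hne ltac:(lra)) as [p [m [q [E [Hp Hq]]]]].
  exists p, m, q. split; [auto|]. split; [auto|].
  eapply Rle_trans; [exact Hq|]. unfold Rmax. destruct Rle_dec; lra.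
Qed.

Lemma mul_telescope (x a b y : G) :
  mul (mul (inv x) a) (mul (mul (inv a) b) (mul (inv b) y)) = mul (inv x) y.
Proof. rewrite <- !mul_assoc, !mul_inv_cancel_l. reflexivity. Qed.

(** Split the chain at its middle step; both halves weigh
    [≤ 2^-(N+2)], the middle step lies in [V_(N+1)], and [V_(N+1)³ ⊆ V_N]. *)
Lemma chain_small_weight k : forall l x y N, (length l <= k)%nat -> chain x y l ->
  weight l <= half_pow (S N) -> nbhd N (mul (inv x) y).
Proof.
  induction k as [|k IH]; intros l x y N Hlen Hchain Hw.
  { destruct l; [|simpl in Hlen; lia]. inversion Hchain; subst.
    rewrite mul_inv_l. apply nbhd_open_one. }
  destruct (list_eq_dec Nat.eq_dec l []) as [->|Hne].
  { inversion Hchain; subst. rewrite mul_inv_l. apply nbhd_open_one. }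
  destruct (weight_split_half l Hne) as [p [m [q [E [Hp Hq]]]]].
  rewrite E in Hchain. destruct (chain_split _ _ _ _ _ Hchain) as [a [b [Hxa [Hab Hby]]]].
  assert (Hlen' : length l = (length p + S (length q))%nat)
    by (rewrite E, length_app; reflexivity).
  assert (Hweight : weight l = weight p + half_pow m + weight q)
    by (rewrite E, weight_app; simpl; lra).
  pose proof (weight_nonneg p). pose proof (weight_nonneg q).
  rewrite half_pow_S in Hw.
  assert (Hhalf : weight l / 2 <= half_pow (S (S N))) by (rewrite !half_pow_S; lra).
  assert (V1 : nbhd (S N) (mul (inv x) a)) by (apply (IH p); auto; [lia|lra]).
  assert (V3 : nbhd (S N) (mul (inv b) y)) by (apply (IH q); auto; [lia|lra]).
  assert (V2 : nbhd (S N) (mul (inv a) b)).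
  { apply (nbhd_antitone (S N) m); auto. apply half_pow_le_level. rewrite half_pow_S. lra. }
  rewrite <- (mul_telescope x a b y). apply nbhd_cube; auto.
Qed.

Definition chain_weights (x y : G) (t : R) : Prop := exists l, chain x y l /\ t = weight l.

Definition chain_dist (x y : G) : R := real_inf (chain_weights x y).

Lemma chain_dist_spec x y : is_inf (chain_weights x y) (chain_dist x y).
Proof.
  apply real_inf_spec.
  - exists (weight [0%nat]), [0%nat]. split; [|reflexivity].
    econstructor; [|constructor]. exact I.
  - intros t [l [_ ->]]. apply weight_nonneg.
Qed.

Lemma chain_dist_le x y l : chain x y l -> chain_dist x y <= weight l.
Proof. intros H. apply (proj1 (chain_dist_spec x y)). exists l. auto. Qed.

Lemma chain_dist_nonneg x y : 0 <= chain_dist x y.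
Proof. apply (proj2 (chain_dist_spec x y)). intros t [l [_ ->]]. apply weight_nonneg. Qed.

Lemma chain_dist_refl x : chain_dist x x = 0.
Proof.
  pose proof (chain_dist_nonneg x x). pose proof (chain_dist_le x x [] (chain_nil x)).
  simpl in *. lra.
Qed.

Lemma chain_dist_sym x y : chain_dist x y = chain_dist y x.
Proof.
  assert (Hle : forall x y, chain_dist y x <= chain_dist x y).
  { intros x1 y1. apply (proj2 (chain_dist_spec x1 y1)). intros t [l [Hc ->]].
    rewrite <- weight_rev. apply chain_dist_le, chain_rev, Hc. }
  pose proof (Hle x y). pose proof (Hle y x). lra.
Qed.

Lemma chain_dist_triangle x y z : chain_dist x z <= chain_dist x y + chain_dist y z.
Proof.
  assert (Hfirst : forall l2, chain y z l2 -> chain_dist x z - weight l2 <= chain_dist x y).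
  { intros l2 H2. apply (proj2 (chain_dist_spec x y)). intros t [l1 [H1 ->]].
    pose proof (chain_dist_le _ _ _ (chain_app _ _ _ _ _ H1 H2)).
    rewrite weight_app in *. lra. }
  assert (chain_dist x z - chain_dist x y <= chain_dist y z); [|lra].
  apply (proj2 (chain_dist_spec y z)). intros t [l [Hl ->]]. specialize (Hfirst l Hl). lra.
Qed.

Lemma chain_dist_small x y N : chain_dist x y < half_pow (S N) -> nbhd N (mul (inv x) y).
Proof.
  intros H. destruct (classic (exists l, chain x y l /\ weight l < half_pow (S N)))
    as [[l [Hc Hl]]|Hnone].
  - apply (chain_small_weight (length l) l); auto. lra.
  - exfalso. assert (half_pow (S N) <= chain_dist x y); [|lra].
    apply (proj2 (chain_dist_spec x y)). intros t [l [Hc ->]].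
    destruct (Rle_or_lt (half_pow (S N)) (weight l)); [auto|]. exfalso. eauto.
Qed.

Lemma chain_dist_quarter x y : chain_dist x y < half_pow 2 -> W (mul (inv x) y).
Proof. intros H. apply nbhd_1_W, chain_dist_small, H. Qed.

(** Continuity: the open set [x V_N] is contained in the [2^-N]-ball at [x]. *)
Lemma chain_dist_continuous x e : 0 < e ->
  exists V, is_open V /\ V x /\ forall y, V y -> chain_dist x y < e.
Proof.
  intros He. destruct (half_pow_small e He) as [N HN].
  exists (fun y => nbhd N (mul (inv x) y)).
  split; [apply open_translate, nbhd_open_one|].
  split; [rewrite mul_inv_l; apply nbhd_open_one|].
  intros y Hy. pose proof (chain_dist_le x y [N] (chain_cons _ _ _ _ _ Hy (chain_nil y))).
  simpl in *. lra.
Qed.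

End TopGroupFacts.

Theorem mainTheorem4 (G : TopGroup) (U : G -> Prop) :
  is_open U -> (exists u, U u) ->
  exists (S : Type) (f : S -> G -> R),
    partition_of_unity f /\ small_for_translates f U.
Proof.
  intros HU [u Uu].
  set (W := fun z => U (mul u z)).
  assert (HW : is_open W) by (apply open_translate; exact HU).
  assert (W1 : W (one G)) by (unfold W; rewrite mul_one_r; exact Uu).
  destruct (WellOrdering.exists_well_ordering G) as [wo [wo_least wo_antisym]].
  destruct (stone_partition_of_unity G (chain_dist G W)
      (chain_dist_nonneg G W) (chain_dist_refl G W) (chain_dist_sym G W HW W1)
      (chain_dist_triangle G W) wo wo_least wo_antisym (half_pow 2) (half_pow_pos 2)
      is_open (chain_dist_continuous G W HW W1))
    as [f [Hbounds [Hsum [Hcont Hcarrier]]]].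
  exists (G * nat)%type, f. split.
  - split; [exact (inhabits (one G, 0%nat))|auto].
  - (* The carrier of [f (b, i)] lies in [bW = (bu⁻¹)U]. *)
    intros [b i]. exists (mul b (inv u)). intros x Hx.
    assert (Hbx : W (mul (inv b) x)) by exact (chain_dist_quarter G W HW W1 b x (Hcarrier _ _ Hx)).
    exists (mul u (mul (inv b) x)). split; [exact Hbx|].
    rewrite <- mul_assoc, inv_mul_cancel_l, mul_inv_cancel_l. reflexivity.
Qed.
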